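(* For every $n\ge1$ and every choice of coefficients, there exist real constants $\tau_{i,j},\sigma_{i,j}$ ($0\le i+j\le n$), depending on the coefficients, and a real polynomial $\phi$ of degree at most $2n+\frac{3+(-1)^n}{2}$ such that for all $h\in(0,+\infty)$, $$M(h)=\sum_{0\le i+j\le n}\tau_{i,j}I_{i,j}(h)+\sum_{0\le i+j\le n}\sigma_{i,j}J_{i,j}(h)+\phi\big(u(h)\big).$$
   Context: Fix an integer $n\ge 1$ and real coefficients $a^k_{i,j},b^k_{i,j}$ ($k=1,2,3,4$; $i+j\le n$), $f_k=\sum_{0\le i+j\le n}a^k_{i,j}x^iy^j$, $g_k=\sum_{0\le i+j\le n}b^k_{i,j}x^iy^j$. For $h>0$ let $u(h)=\sqrt{(\sqrt{1+4h}-1)/2}$ (so $u^4+u^2=h$), $\Gamma_h$ the circle $x^2+y^2=h$, and $A=(u,u^2)$, $B=(u,-u^2)$, $C=(-u,-u^2)$, $D=(-u,u^2)$. Let $\widehat{AB},\widehat{BC},\widehat{CD},\widehat{DA}$ be the arcs of $\Gamma_h$ traversed clockwise from $A$ to $B$ (through $(\sqrt h,0)$), $B$ to $C$ (through $(0,-\sqrt h)$), $C$ to $D$ (through $(-\sqrt h,0)$), $D$ to $A$ (through $(0,\sqrt h)$). Define $$M(h)=\int_{\widehat{AB}}g_1dx-f_1dy+\int_{\widehat{BC}}g_2dx-f_2dy+\int_{\widehat{CD}}g_3dx-f_3dy+\int_{\widehat{DA}}g_4dx-f_4dy,$$ the first order Melnikov function of the system $\dot x=y+\varepsilon f_k,\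 \dot y=-x+\varepsilon g_k$ on the regions $R_1=\{x>0,-x^2<y<x^2\}$, $R_2=\{y<-x^2\}$, $R_3=\{x<0,-x^2<y<x^2\}$, $R_4=\{y>x^2\}$. For integers $i,j\ge0$, $I_{i,j}(h)=\int_{\widehat{AB}}x^iy^jdx$ and $J_{i,j}(h)=\int_{\widehat{BC}}x^iy^jdx$. *)

From Stdlib Require Import Reals Lra Classical ClassicalEpsilon ClassicalDescription.
Open Scope R_scope.

(* Oriented Riemann integral of f from a to b (a > b allowed, giving the
   negative of the integral from b to a); 0 if f is not Riemann integrable.
   The value RiemannInt pr does not depend on the proof pr. *)
Definition Rint (f : R -> R) (a b : R) : R :=
  match excluded_middle_informative
          (exists v : R, exists pr : Riemann_integrable f a b, RiemannInt pr = v) with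
  | left H => proj1_sig (constructive_indefinite_description _ H)
  | right _ => 0
  end.

Definition poly2 (n : nat) (c : nat -> nat -> R) (x y : R) : R :=
  sum_f_R0 (fun i => sum_f_R0 (fun j =>
     if (i + j <=? n)%nat then c i j * x ^ i * y ^ j else 0) n) n.

(* u(h) = sqrt((sqrt(1+4h) - 1)/2), so that u^4 + u^2 = h. *)
Definition uh (h : R) : R := sqrt ((sqrt (1 + 4 * h) - 1) / 2).

(* Polar angle of A = (u, u^2) on the circle x^2+y^2 = h (radius sqrt h):
   tan alpha = u^2/u = u. *)
Definition alpha (h : R) : R := atan (uh h).

Definition arc_int (P Q : R -> R -> R) (h t0 t1 : R) : R :=
  Rint (fun t =>
          let r := sqrt h in
          let x := r * cos t in
          let y := r * sin t in
          P x y * (- r * sin t) + Q x y * (r * cos t)) t0 t1.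

(* Angular parameter ranges of the clockwise arcs (theta decreasing):
   AB : alpha -> -alpha          (through (sqrt h, 0), theta = 0)
   BC : -alpha -> alpha - PI     (through (0,-sqrt h), theta = -PI/2)
   CD : alpha - PI -> -PI - alpha (through (-sqrt h,0), theta = -PI)
   DA : -PI - alpha -> alpha - 2 PI (through (0, sqrt h), theta = -3PI/2) *)

Definition arc_gf (f g : R -> R -> R) (h t0 t1 : R) : R :=
  arc_int g (fun x y => - f x y) h t0 t1.

(* First order Melnikov function; a k, b k (k = 1..4) are the coefficient
   families of f_k, g_k. *)
Definition Melnikov (n : nat) (a b : nat -> nat -> nat -> R) (h : R) : R :=
  let al := alpha h in
  arc_gf (poly2 n (a 1%nat)) (poly2 n (b 1%nat)) h al (- al)
  + arc_gf (poly2 n (a 2%nat)) (poly2 n (b 2%nat)) h (- al) (al - PI)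
  + arc_gf (poly2 n (a 3%nat)) (poly2 n (b 3%nat)) h (al - PI) (- PI - al)
  + arc_gf (poly2 n (a 4%nat)) (poly2 n (b 4%nat)) h (- PI - al) (al - 2 * PI).

Definition Iij (i j : nat) (h : R) : R :=
  arc_int (fun x y => x ^ i * y ^ j) (fun _ _ => 0) h (alpha h) (- alpha h).
Definition Jij (i j : nat) (h : R) : R :=
  arc_int (fun x y => x ^ i * y ^ j) (fun _ _ => 0) h (- alpha h) (alpha h - PI).

Definition sum_tri (n : nat) (F : nat -> nat -> R) : R :=
  sum_f_R0 (fun i => sum_f_R0 (fun j => if (i + j <=? n)%nat then F i j else 0) n) n.

(* 2n + (3 + (-1)^n)/2 : equals 2n+2 for n even, 2n+1 for n odd. *)
Definition phi_deg (n : nat) : nat := (2 * n + (if Nat.even n then 2 else 1))%nat.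

(* The functions of this form make up a linear space ([representable]),
   generated by the [I_ij], the [J_ij] and the powers [u^m], m <= phi_deg n.
   Along each arc, [g dx - f dy] is a combination of the monomial forms
   [x^i y^j dx] and [x^i y^j dy].  Integration by parts turns [x^i y^j dy]
   into [-(i/(j+1)) x^(i-1) y^(j+1) dx] plus the boundary values of
   [x^i y^(j+1)/(j+1)]; the arcs end at the corners [(+-u, +-u^2)], where
   [x^i y^(j+1)] is [+-u^(i+2j+2)].  This exponent exceeds [phi_deg n] only
   when [n] is odd, [i = 0] and [j = n]; then [j + 1] is even and the two
   boundary values cancel.  The [dx]-integrals are [I_ij] on AB and [J_ij] on
   BC, and [+-I_ij], [+-J_ij] on CD and DA, which are AB and BC rotated by
   [PI]. *)

From Stdlib Require Import Reals Lra Lia ClassicalEpsilon ClassicalDescription.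
From Coquelicot Require Import Coquelicot.
Open Scope R_scope.

Lemma sum_tri_ext n (F G : nat -> nat -> R) :
  (forall i j, F i j = G i j) -> sum_tri n F = sum_tri n G.
Proof.
  intro E. unfold sum_tri. apply sum_eq; intros i _. apply sum_eq; intros j _.
  now rewrite E.
Qed.

Lemma sum_tri_plus n (F G : nat -> nat -> R) :
  sum_tri n (fun i j => F i j + G i j) = sum_tri n F + sum_tri n G.
Proof.
  unfold sum_tri. rewrite <- sum_plus. apply sum_eq; intros i _.
  rewrite <- sum_plus. apply sum_eq; intros j _. destruct (i + j <=? n)%nat; ring.
Qed.

Lemma sum_tri_scal n c (F : nat -> nat -> R) :
  sum_tri n (fun i j => c * F i j) = c * sum_tri n F.
Proof.
  unfold sum_tri. rewrite scal_sum. apply sum_eq; intros i _.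
  rewrite Rmult_comm, scal_sum. apply sum_eq; intros j _.
  destruct (i + j <=? n)%nat; ring.
Qed.

Lemma sum_tri_zero n (F : nat -> nat -> R) : sum_tri n (fun i j => 0 * F i j) = 0.
Proof. rewrite sum_tri_scal. ring. Qed.

Lemma sum_delta (x : R) m N :
  (m <= N)%nat -> sum_f_R0 (fun k => if (k =? m)%nat then x else 0) N = x.
Proof.
  induction N as [|N IH]; intro Hm.
  - replace m with 0%nat by lia. reflexivity.
  - rewrite tech5. destruct (Nat.eqb_spec (S N) m) as [<-|Hne].
    + rewrite sum_eq_R0; [ring|]. intros k Hk.
      destruct (Nat.eqb_spec k (S N)); [lia | reflexivity].
    + rewrite IH by lia. ring.
Qed.

Lemma sum_tri_delta n i j (F : nat -> nat -> R) : (i + j <= n)%nat ->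
  sum_tri n (fun i' j' => (if andb (i' =? i)%nat (j' =? j)%nat then 1 else 0) * F i' j')
  = F i j.
Proof.
  intro Hij. unfold sum_tri.
  rewrite (sum_eq _ (fun i' => if (i' =? i)%nat then F i j else 0)).
  { apply sum_delta. lia. }
  intros i' _. rewrite <- (sum_delta (if (i' =? i)%nat then F i j else 0) j n) by lia.
  apply sum_eq; intros j' _.
  destruct (Nat.eqb_spec i' i), (Nat.eqb_spec j' j); subst; simpl;
    try (destruct (_ <=? n)%nat; ring).
  destruct (Nat.leb_spec (i + j) n); [ring | lia].
Qed.

Lemma Rint_is_RInt (f : R -> R) (a b v : R) : is_RInt f a b v -> Rint f a b = v.
Proof.
  intro H. unfold Rint.
  match goal with
  | |- context [excluded_middle_informative ?P] =>
      destruct (excluded_middle_informative P) as [E|N]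
  end.
  - destruct (constructive_indefinite_description _ E) as [w [pr Hw]]. simpl.
    rewrite <- Hw, <- RInt_Reals. now apply is_RInt_unique.
  - exfalso. apply N. exists v, (ex_RInt_Reals_0 _ _ _ (ex_intro _ v H)).
    rewrite <- RInt_Reals. now apply is_RInt_unique.
Qed.

Lemma is_RInt_sum_tri n (F : nat -> nat -> R -> R) (v : nat -> nat -> R) a b :
  (forall i j, is_RInt (F i j) a b (v i j)) ->
  is_RInt (fun t => sum_tri n (fun i j => F i j t)) a b (sum_tri n v).
Proof.
  intro H. unfold sum_tri.
  assert (Hsum : forall (G : nat -> R -> R) (w : nat -> R) N,
             (forall k, is_RInt (G k) a b (w k)) ->
             is_RInt (fun t => sum_f_R0 (fun k => G k t) N) a b (sum_f_R0 w N)).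
  { intros G w N HG. induction N as [|N IH]; [apply HG|].
    apply (is_RInt_plus (V := R_NormedModule)); [exact IH | apply HG]. }
  apply Hsum; intro i. apply Hsum; intro j.
  destruct (i + j <=? n)%nat; [apply H|].
  pose proof (is_RInt_const (V := R_NormedModule) a b 0) as H0.
  unfold scal in H0; simpl in H0; unfold mult in H0; simpl in H0.
  now rewrite Rmult_0_r in H0.
Qed.

(* Along [t |-> (x, y) = (sqrt h cos t, sqrt h sin t)], the integrands of the
   forms [x^i y^j dx] and [x^i y^j dy], and the function [x^i y^(j+1)] whose
   derivative links them. *)
Definition mono_dx (i j : nat) (h t : R) : R :=
  (sqrt h * cos t) ^ i * (sqrt h * sin t) ^ j * (- sqrt h * sin t).
Definition mono_dy (i j : nat) (h t : R) : R :=
  (sqrt h * cos t) ^ i * (sqrt h * sin t) ^ j * (sqrt h * cos t).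
Definition mono_xy (i j : nat) (h t : R) : R :=
  (sqrt h * cos t) ^ i * (sqrt h * sin t) ^ S j.

Definition arc_dx (i j : nat) (h a b : R) : R := RInt (mono_dx i j h) a b.
Definition arc_dy (i j : nat) (h a b : R) : R := RInt (mono_dy i j h) a b.

Lemma is_RInt_of_derivable (f : R -> R) a b :
  (forall t, ex_derive f t) -> is_RInt f a b (RInt f a b).
Proof.
  intro Hf. apply (RInt_correct (V := R_CompleteNormedModule)),
    (ex_RInt_continuous (V := R_CompleteNormedModule)).
  intros t _. apply (ex_derive_continuous (K := R_AbsRing)
    (V := CompleteNormedModule.NormedModule _ R_CompleteNormedModule)), Hf.
Qed.

Lemma is_arc_dx i j h a b : is_RInt (mono_dx i j h) a b (arc_dx i j h a b).
Proof. apply is_RInt_of_derivable. intro t. unfold mono_dx. auto_derive. auto. Qed.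

Lemma is_arc_dy i j h a b : is_RInt (mono_dy i j h) a b (arc_dy i j h a b).
Proof. apply is_RInt_of_derivable. intro t. unfold mono_dy. auto_derive. auto. Qed.

(* Integration by parts on the arc: since
   [d(x^i y^(j+1)) = (j+1) x^i y^j dy + i x^(i-1) y^(j+1) dx],
   every [dy]-integral reduces to a [dx]-integral plus boundary values. *)
Lemma arc_by_parts i j h a b :
  (INR j + 1) * arc_dy i j h a b + INR i * arc_dx (pred i) (S j) h a b
  = mono_xy i j h b - mono_xy i j h a.
Proof.
  set (d := fun t => (INR j + 1) * mono_dy i j h t + INR i * mono_dx (pred i) (S j) h t).
  assert (Hd : forall t, is_derive (mono_xy i j h) t (d t)).
  { intro t. unfold mono_xy, d, mono_dy, mono_dx. auto_derive; [auto|].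
    destruct j; simpl; ring. }
  apply eq_trans with (RInt d a b); [symmetry|]; apply is_RInt_unique.
  - apply (is_RInt_plus (V := R_NormedModule));
      apply (is_RInt_scal (V := R_NormedModule)); [apply is_arc_dy | apply is_arc_dx].
  - apply (is_RInt_derive (V := R_CompleteNormedModule)); intros t _; [apply Hd|].
    apply (ex_derive_continuous (K := R_AbsRing)
      (V := CompleteNormedModule.NormedModule _ R_CompleteNormedModule)).
    unfold d, mono_dy, mono_dx. auto_derive. auto.
Qed.

Lemma arc_gf_monomials n (A B : nat -> nat -> R) h t0 t1 :
  arc_gf (poly2 n A) (poly2 n B) h t0 t1 =
  sum_tri n (fun i j => B i j * arc_dx i j h t0 t1 - A i j * arc_dy i j h t0 t1).
Proof.
  set (x := fun t => sqrt h * cos t). set (y := fun t => sqrt h * sin t).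
  assert (Split : forall t,
    poly2 n B (x t) (y t) * (- sqrt h * sin t) + - poly2 n A (x t) (y t) * (sqrt h * cos t)
    = sum_tri n (fun i j => B i j * mono_dx i j h t - A i j * mono_dy i j h t)).
  { intro t.
    rewrite (sum_tri_ext n _ (fun i j => B i j * mono_dx i j h t + (- A i j) * mono_dy i j h t))
      by (intros; ring).
    rewrite sum_tri_plus.
    rewrite (sum_tri_ext n (fun i j => B i j * mono_dx i j h t)
      (fun i j => (- sqrt h * sin t) * (B i j * x t ^ i * y t ^ j)))
      by (intros; unfold mono_dx, x, y; ring).
    rewrite (sum_tri_ext n (fun i j => - A i j * mono_dy i j h t)
      (fun i j => (- (sqrt h * cos t)) * (A i j * x t ^ i * y t ^ j)))
      by (intros; unfold mono_dy, x, y; ring).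
    rewrite !sum_tri_scal. unfold poly2, sum_tri. ring. }
  apply Rint_is_RInt, (is_RInt_ext (fun t => sum_tri n (fun i j =>
             B i j * mono_dx i j h t - A i j * mono_dy i j h t))).
  - intros t _. symmetry. apply Split.
  - apply is_RInt_sum_tri. intros i j.
    apply (is_RInt_minus (V := R_NormedModule)); apply (is_RInt_scal (V := R_NormedModule));
      [apply is_arc_dx | apply is_arc_dy].
Qed.

(** The corners [(+-u, +-u^2)] and the rotation by [PI]. *)

Lemma uh_spec h : 0 < h -> 0 <= uh h /\ uh h ^ 4 + uh h ^ 2 = h.
Proof.
  intro hp. unfold uh. set (s := sqrt (1 + 4 * h)).
  assert (Hs1 : 1 <= s).
  { rewrite <- sqrt_1. apply sqrt_le_1_alt. lra. }
  assert (Hs2 : s * s = 1 + 4 * h) by (apply sqrt_sqrt; lra).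
  assert (Hq : sqrt ((s - 1) / 2) ^ 2 = (s - 1) / 2)
    by (rewrite <- Rsqr_pow2; apply Rsqr_sqrt; lra).
  split; [apply sqrt_pos|].
  replace (sqrt ((s - 1) / 2) ^ 4) with ((sqrt ((s - 1) / 2) ^ 2) ^ 2) by ring.
  rewrite Hq. nra.
Qed.

Lemma alpha_corner h : 0 < h ->
  sqrt h * cos (alpha h) = uh h /\ sqrt h * sin (alpha h) = uh h ^ 2.
Proof.
  intro hp. destruct (uh_spec h hp) as [u0 uH].
  unfold alpha. rewrite cos_atan, sin_atan. set (u := uh h) in *.
  assert (Q : 0 < sqrt (1 + u²)) by (apply sqrt_lt_R0; unfold Rsqr; nra).
  assert (Hr : sqrt h = u * sqrt (1 + u²)).
  { rewrite <- uH. replace (u ^ 4 + u ^ 2) with ((u * u) * (1 + u²)) by (unfold Rsqr; ring).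
    rewrite sqrt_mult, sqrt_square by (unfold Rsqr; nra). reflexivity. }
  rewrite Hr. split; field; lra.
Qed.

Definition at_corner (t : R -> R) (sx sy : R) : Prop :=
  forall h, 0 < h -> sqrt h * cos (t h) = sx * uh h /\ sqrt h * sin (t h) = sy * uh h ^ 2.

Lemma corner_A : at_corner alpha 1 1.
Proof. intros h hp. destruct (alpha_corner h hp) as [-> ->]. split; ring. Qed.

Lemma corner_B : at_corner (fun h => - alpha h) 1 (-1).
Proof.
  intros h hp. destruct (alpha_corner h hp) as [Hc Hs].
  rewrite cos_neg, sin_neg. split; [rewrite Hc | rewrite <- Hs]; ring.
Qed.

Lemma corner_C : at_corner (fun h => alpha h - PI) (-1) (-1).
Proof.
  intros h hp. destruct (alpha_corner h hp) as [Hc Hs].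
  rewrite cos_minus, sin_minus, cos_PI, sin_PI. split; [rewrite <- Hc | rewrite <- Hs]; ring.
Qed.

Lemma corner_D : at_corner (fun h => - PI - alpha h) (-1) 1.
Proof.
  intros h hp. destruct (alpha_corner h hp) as [Hc Hs].
  rewrite cos_minus, sin_minus, cos_neg, sin_neg, cos_PI, sin_PI.
  split; [rewrite <- Hc | rewrite <- Hs]; ring.
Qed.

Lemma corner_A' : at_corner (fun h => alpha h - 2 * PI) 1 1.
Proof.
  intros h hp. destruct (alpha_corner h hp) as [Hc Hs].
  rewrite cos_minus, sin_minus, cos_2PI, sin_2PI. split; [rewrite <- Hc | rewrite <- Hs]; ring.
Qed.

Lemma mono_xy_at_corner t sx sy i j h : at_corner t sx sy -> 0 < h ->
  mono_xy i j h (t h) = sx ^ i * sy ^ S j * uh h ^ (i + 2 * S j).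
Proof.
  intros Ht hp. destruct (Ht h hp) as [Hc Hs].
  unfold mono_xy. rewrite Hc, Hs, !Rpow_mult_distr, pow_add, pow_mult. ring.
Qed.

(* Rotating by [PI] maps [(x, y)] to [(-x, -y)], so [x^i y^j dx] changes by
   the sign [(-1)^(i+j+1)]. *)
Lemma mono_dx_shift_PI i j h t :
  mono_dx i j h (t - PI) = (-1) ^ (i + j + 1) * mono_dx i j h t.
Proof.
  unfold mono_dx. rewrite cos_minus, sin_minus, cos_PI, sin_PI, !pow_add.
  replace (sqrt h * (cos t * -1 + sin t * 0)) with ((-1) * (sqrt h * cos t)) by ring.
  replace (sqrt h * (sin t * -1 - cos t * 0)) with ((-1) * (sqrt h * sin t)) by ring.
  rewrite !Rpow_mult_distr. ring.
Qed.

Lemma arc_dx_shift_PI i j h a b :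
  arc_dx i j h (a - PI) (b - PI) = (-1) ^ (i + j + 1) * arc_dx i j h a b.
Proof.
  assert (Ex : forall a b, ex_RInt (mono_dx i j h) a b) by (intros; eexists; apply is_arc_dx).
  unfold arc_dx.
  replace (a - PI) with (1 * a + - PI) by ring. replace (b - PI) with (1 * b + - PI) by ring.
  rewrite <- (RInt_comp_lin (V := R_CompleteNormedModule)) by apply Ex.
  rewrite <- (RInt_scal (V := R_CompleteNormedModule)) by apply Ex.
  apply RInt_ext. intros t _. unfold scal; simpl; unfold mult; simpl.
  replace (1 * t + - PI) with (t - PI) by ring. rewrite mono_dx_shift_PI. ring.
Qed.

(** The space of functions of the form asserted by the theorem. *)

Definition combo (n : nat) (tau sigma : nat -> nat -> R) (phi : nat -> R) (h : R) : R :=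
  sum_tri n (fun i j => tau i j * Iij i j h)
  + sum_tri n (fun i j => sigma i j * Jij i j h)
  + sum_f_R0 (fun k => phi k * uh h ^ k) (phi_deg n).

Definition representable (n : nat) (F : R -> R) : Prop :=
  exists tau sigma phi, forall h, 0 < h -> F h = combo n tau sigma phi h.

Lemma combo_lin n t1 s1 p1 t2 s2 p2 c h :
  combo n (fun i j => t1 i j + c * t2 i j) (fun i j => s1 i j + c * s2 i j)
          (fun k => p1 k + c * p2 k) h
  = combo n t1 s1 p1 h + c * combo n t2 s2 p2 h.
Proof.
  assert (Ltri : forall (u v X : nat -> nat -> R),
    sum_tri n (fun i j => (u i j + c * v i j) * X i j)
    = sum_tri n (fun i j => u i j * X i j) + c * sum_tri n (fun i j => v i j * X i j)).
  { intros u v X. rewrite <- sum_tri_scal, <- sum_tri_plus.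
    apply sum_tri_ext. intros; ring. }
  assert (Lsum : forall (u v X : nat -> R) N,
    sum_f_R0 (fun k => (u k + c * v k) * X k) N
    = sum_f_R0 (fun k => u k * X k) N + c * sum_f_R0 (fun k => v k * X k) N).
  { intros u v X N. rewrite scal_sum, <- sum_plus. apply sum_eq. intros; ring. }
  unfold combo. rewrite !Ltri, Lsum. ring.
Qed.

Lemma combo_zero n h : combo n (fun _ _ => 0) (fun _ _ => 0) (fun _ => 0) h = 0.
Proof.
  unfold combo. rewrite !sum_tri_zero, sum_eq_R0 by (intros; ring). ring.
Qed.

Lemma repr_ext n (F G : R -> R) :
  (forall h, 0 < h -> F h = G h) -> representable n G -> representable n F.
Proof.
  intros E [t [s [p H]]]. exists t, s, p. intros h hp. rewrite E by exact hp. now apply H.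
Qed.

Lemma repr_zero n : representable n (fun _ => 0).
Proof.
  exists (fun _ _ => 0), (fun _ _ => 0), (fun _ => 0). intros h _. now rewrite combo_zero.
Qed.

Lemma repr_lin n c F G :
  representable n F -> representable n G -> representable n (fun h => F h + c * G h).
Proof.
  intros [t1 [s1 [p1 H1]]] [t2 [s2 [p2 H2]]].
  exists (fun i j => t1 i j + c * t2 i j), (fun i j => s1 i j + c * s2 i j),
         (fun k => p1 k + c * p2 k).
  intros h hp. now rewrite combo_lin, H1, H2.
Qed.

Lemma repr_plus n F G :
  representable n F -> representable n G -> representable n (fun h => F h + G h).
Proof.
  intros HF HG. apply (repr_ext _ _ (fun h => F h + 1 * G h)); [intros; ring|].
  now apply repr_lin.
Qed.

Lemma repr_scal n c F : representable n F -> representable n (fun h => c * F h).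
Proof.
  intro HF. apply (repr_ext _ _ (fun h => 0 + c * F h)); [intros; ring|].
  apply repr_lin; [apply repr_zero | exact HF].
Qed.

Lemma repr_minus n F G :
  representable n F -> representable n G -> representable n (fun h => F h - G h).
Proof.
  intros HF HG. apply (repr_ext _ _ (fun h => F h + (-1) * G h)); [intros; ring|].
  now apply repr_lin.
Qed.

Lemma repr_sum_tri n (F : nat -> nat -> R -> R) :
  (forall i j, (i + j <= n)%nat -> representable n (F i j)) ->
  representable n (fun h => sum_tri n (fun i j => F i j h)).
Proof.
  intro HF.
  assert (Hsum : forall (G : nat -> R -> R) N, (forall k, representable n (G k)) ->
            representable n (fun h => sum_f_R0 (fun k => G k h) N)).
  { intros G N HG. induction N as [|N IH]; [apply HG | now apply repr_plus]. }
  unfold sum_tri. apply Hsum; intro i. apply Hsum; intro j.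
  destruct (Nat.leb_spec (i + j) n); [now apply HF | apply repr_zero].
Qed.

Lemma repr_I n i j : (i + j <= n)%nat -> representable n (Iij i j).
Proof.
  intro Hij. exists (fun i' j' => if andb (i' =? i)%nat (j' =? j)%nat then 1 else 0),
    (fun _ _ => 0), (fun _ => 0).
  intros h _. unfold combo.
  rewrite sum_tri_delta, sum_tri_zero, sum_eq_R0 by (intros; ring || exact Hij). ring.
Qed.

Lemma repr_J n i j : (i + j <= n)%nat -> representable n (Jij i j).
Proof.
  intro Hij. exists (fun _ _ => 0),
    (fun i' j' => if andb (i' =? i)%nat (j' =? j)%nat then 1 else 0), (fun _ => 0).
  intros h _. unfold combo.
  rewrite sum_tri_delta, sum_tri_zero, sum_eq_R0 by (intros; ring || exact Hij). ring.
Qed.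

Lemma repr_pow n m : (m <= phi_deg n)%nat -> representable n (fun h => uh h ^ m).
Proof.
  intro Hm. exists (fun _ _ => 0), (fun _ _ => 0), (fun k => if (k =? m)%nat then 1 else 0).
  intros h _. unfold combo. rewrite !sum_tri_zero.
  rewrite (sum_eq _ (fun k => if (k =? m)%nat then uh h ^ m else 0)), sum_delta by
    (try exact Hm; intros k _; destruct (Nat.eqb_spec k m); subst; ring).
  ring.
Qed.

(* The boundary terms [u^(i+2j+2)] fit under [phi_deg n], except for [i = 0],
   [j = n] with [n] odd, where [j + 1] is even. *)
Lemma degree_bound n i j : (i + j <= n)%nat ->
  (i + 2 * S j <= phi_deg n)%nat \/ (i = 0%nat /\ j = n /\ Nat.Even (S n)).
Proof.
  intro Hij. unfold phi_deg. destruct (Nat.even n) eqn:En; [left; lia|].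
  destruct (Nat.le_gt_cases (i + 2 * S j) (2 * n + 1)) as [Hle|Hgt]; [now left|].
  right. repeat split; try lia.
  apply Nat.even_spec. now rewrite Nat.even_succ, <- Nat.negb_even, En.
Qed.

Section Arc.

Variables (n : nat) (t0 t1 : R -> R) (sx0 sy0 sx1 sy1 : R).
Hypothesis sign0 : sy0 ^ 2 = 1.
Hypothesis sign1 : sy1 ^ 2 = 1.
Hypothesis start : at_corner t0 sx0 sy0.
Hypothesis stop : at_corner t1 sx1 sy1.
Hypothesis repr_dx : forall i j, (i + j <= n)%nat ->
  representable n (fun h => arc_dx i j h (t0 h) (t1 h)).

Lemma repr_boundary i j : (i + j <= n)%nat ->
  representable n (fun h => mono_xy i j h (t1 h) - mono_xy i j h (t0 h)).
Proof.
  intro Hij. set (c := sx1 ^ i * sy1 ^ S j - sx0 ^ i * sy0 ^ S j).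
  apply (repr_ext _ _ (fun h => c * uh h ^ (i + 2 * S j))).
  { intros h hp. rewrite (mono_xy_at_corner _ _ _ _ _ _ stop hp),
      (mono_xy_at_corner _ _ _ _ _ _ start hp). unfold c. ring. }
  destruct (degree_bound n i j Hij) as [Hdeg | (-> & -> & [k Hk])].
  - now apply repr_scal, repr_pow.
  - assert (Hc : c = 0) by (unfold c; rewrite Hk, !pow_mult, sign0, sign1, !pow1; ring).
    apply (repr_ext _ _ (fun _ => 0)); [intros; rewrite Hc; ring | apply repr_zero].
Qed.

Lemma repr_dy i j : (i + j <= n)%nat ->
  representable n (fun h => arc_dy i j h (t0 h) (t1 h)).
Proof.
  intro Hij.
  assert (Hj : INR j + 1 <> 0) by (pose proof (pos_INR j); lra).
  apply (repr_ext _ _ (fun h => / (INR j + 1) *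
    ((mono_xy i j h (t1 h) - mono_xy i j h (t0 h))
     - INR i * arc_dx (pred i) (S j) h (t0 h) (t1 h)))).
  { intros h _. rewrite <- arc_by_parts. field. exact Hj. }
  apply repr_scal, repr_minus; [now apply repr_boundary|].
  destruct i as [|i].
  - apply (repr_ext _ _ (fun _ => 0)); [intros; simpl; ring | apply repr_zero].
  - apply repr_scal, repr_dx. lia.
Qed.

Lemma repr_arc (A B : nat -> nat -> R) :
  representable n (fun h => arc_gf (poly2 n A) (poly2 n B) h (t0 h) (t1 h)).
Proof.
  apply (repr_ext _ _ (fun h => sum_tri n (fun i j =>
     B i j * arc_dx i j h (t0 h) (t1 h) - A i j * arc_dy i j h (t0 h) (t1 h)))).
  { intros h _. apply arc_gf_monomials. }
  apply (repr_sum_tri n (fun i j h =>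
     B i j * arc_dx i j h (t0 h) (t1 h) - A i j * arc_dy i j h (t0 h) (t1 h))).
  intros i j Hij. apply repr_minus; apply repr_scal; [now apply repr_dx | now apply repr_dy].
Qed.

End Arc.

(* On AB and BC the [dx]-integrals are [I_ij] and [J_ij]; CD and DA are AB and
   BC rotated by [PI], which only changes signs. *)
Lemma Iij_arc_dx i j h : Iij i j h = arc_dx i j h (alpha h) (- alpha h).
Proof.
  apply Rint_is_RInt, (is_RInt_ext (mono_dx i j h)); [|apply is_arc_dx].
  intros t _. unfold mono_dx. simpl. ring.
Qed.

Lemma Jij_arc_dx i j h : Jij i j h = arc_dx i j h (- alpha h) (alpha h - PI).
Proof.
  apply Rint_is_RInt, (is_RInt_ext (mono_dx i j h)); [|apply is_arc_dx].
  intros t _. unfold mono_dx. simpl. ring.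
Qed.

Lemma repr_AB n (A B : nat -> nat -> R) :
  representable n (fun h => arc_gf (poly2 n A) (poly2 n B) h (alpha h) (- alpha h)).
Proof.
  apply (repr_arc n _ _ 1 1 1 (-1) ltac:(ring) ltac:(ring) corner_A corner_B).
  intros i j Hij. apply (repr_ext _ _ (Iij i j)).
  - intros. symmetry. apply Iij_arc_dx.
  - now apply repr_I.
Qed.

Lemma repr_BC n (A B : nat -> nat -> R) :
  representable n (fun h => arc_gf (poly2 n A) (poly2 n B) h (- alpha h) (alpha h - PI)).
Proof.
  apply (repr_arc n _ _ 1 (-1) (-1) (-1) ltac:(ring) ltac:(ring) corner_B corner_C).
  intros i j Hij. apply (repr_ext _ _ (Jij i j)).
  - intros. symmetry. apply Jij_arc_dx.
  - now apply repr_J.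
Qed.

Lemma repr_CD n (A B : nat -> nat -> R) :
  representable n (fun h => arc_gf (poly2 n A) (poly2 n B) h (alpha h - PI) (- PI - alpha h)).
Proof.
  apply (repr_arc n _ _ (-1) (-1) (-1) 1 ltac:(ring) ltac:(ring) corner_C corner_D).
  intros i j Hij. apply (repr_ext _ _ (fun h => (-1) ^ (i + j + 1) * Iij i j h)).
  - intros h _. rewrite Iij_arc_dx, <- arc_dx_shift_PI. f_equal. ring.
  - now apply repr_scal, repr_I.
Qed.

Lemma repr_DA n (A B : nat -> nat -> R) :
  representable n (fun h => arc_gf (poly2 n A) (poly2 n B) h (- PI - alpha h) (alpha h - 2 * PI)).
Proof.
  apply (repr_arc n _ _ (-1) 1 1 1 ltac:(ring) ltac:(ring) corner_D corner_A').
  intros i j Hij. apply (repr_ext _ _ (fun h => (-1) ^ (i + j + 1) * Jij i j h)).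
  - intros h _. rewrite Jij_arc_dx, <- arc_dx_shift_PI. f_equal; ring.
  - now apply repr_scal, repr_J.
Qed.

Theorem lemma2p1 :
  forall (n : nat) (a b : nat -> nat -> nat -> R),
    (1 <= n)%nat ->
    exists (tau sigma : nat -> nat -> R) (phi : nat -> R),
      forall h : R, 0 < h ->
        Melnikov n a b h =
          sum_tri n (fun i j => tau i j * Iij i j h)
          + sum_tri n (fun i j => sigma i j * Jij i j h)
          + sum_f_R0 (fun k => phi k * (uh h) ^ k) (phi_deg n).
Proof.
  intros n a b _.
  change (representable n (Melnikov n a b)). unfold Melnikov.
  repeat apply repr_plus;
    [apply repr_AB | apply repr_BC | apply repr_CD | apply repr_DA].
Qed.
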